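(* Let $n\ge1$ and $0<\varphi<t<1$ with $nt$ an integer, and let $\mathrm{lE}_n(t|\varphi)=\min\left((t-\varphi)\sqrt{\frac{\pi n}{8\varphi(1-\varphi)}},1\right)$. Then $$-\log P_{\mathrm{X},n}(t|\varphi)\in-\log P_{\mathrm{CH},n}(t|\varphi)+\tfrac12\log n-\log\left(\frac{1-\varphi}{t-\varphi}\sqrt{\frac{t}{2\pi(1-t)}}\right)+\left[-\frac{\mathrm{lE}_n(t|\varphi)}{n(t-\varphi)},\ \frac{\varphi(1-\varphi)}{(t-\varphi)^2n}+\frac{1}{12nt(1-t)}\right].$$
   Context: Logarithms are natural. For an integer $n\ge1$, $0<\varphi<1$ and $t\in[0,1]$ with $nt$ an integer: $P_{\mathrm{X},n}(t|\varphi)=\sum_{k\ge nt}\binom{n}{k}\varphi^k(1-\varphi)^{n-k}$; $P_{\mathrm{CH},n}(t|\varphi)=\left(\frac{\varphi}{t}\right)^{nt}\left(\frac{1-\varphi}{1-t}\right)^{n(1-t)}$ if $t\ge\varphi$, and $=1$ otherwise. Interval notation: $x\in y+[u,v]$ means $y+u\le x\le y+v$. *)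

From Stdlib Require Import Reals Lra.
Open Scope R_scope.

(* P_{X,n}(t|phi) = sum_{k >= n t} C(n,k) phi^k (1-phi)^(n-k), where n t = m is an
   integer (natural number) given explicitly; the sum runs over k = m..n
   (terms with k > n vanish). *)
Definition P_X (n m : nat) (phi : R) : R :=
  sum_f_R0 (fun j => if (m <=? j)%nat
                     then C n j * phi ^ j * (1 - phi) ^ (n - j)
                     else 0) n.

Definition P_CH (n : nat) (t phi : R) : R :=
  if Rle_dec phi t then
    Rpower (phi / t) (INR n * t) * Rpower ((1 - phi) / (1 - t)) (INR n * (1 - t))
  else 1.

Definition lE (n : nat) (t phi : R) : R :=
  Rmin ((t - phi) * sqrt (PI * INR n / (8 * phi * (1 - phi)))) 1.

(* Let b_j = C(n,j) phi^j (1-phi)^(n-j) and m = nt. For j >= m the ratio b_(j+1)/b_j is at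
   most (n-m) phi / (m (1-phi)) < 1, so the tail is at most the geometric sum
   b_m t(1-phi)/(t-phi). Conversely, as a function of phi the tail has derivative
   m C(n,m) phi^(m-1) (1-phi)^(n-m); bounding ln (1-u) from below by a quadratic in
   ln (phi/u) shows that this derivative dominates that of an explicit function which is
   nonpositive at some u0 < phi and equals b_m t(1-phi)/(t-phi) e^(-c) at phi, with
   c = (1-t) phi / (n (t-phi)^2). Hence -ln P_X lies within [0, c] of
   -ln b_m - ln (t(1-phi)/(t-phi)). Finally ln b_m is expanded by Stirling's formula with
   remainder 0 <= ln k! - (k+1/2) ln k + k - ln(2 pi)/2 <= 1/(12k): the remainder decreases,
   the remainder minus 1/(12k) increases, and Wallis' product identifies the limit. *)

From Stdlib Require Import Reals Lra Lia Factorial.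
From Coquelicot Require Import Coquelicot.
Open Scope R_scope.

Lemma incr_of_derive_nonneg (f df : R -> R) (a b : R) : a <= b ->
  (forall x, a <= x <= b -> is_derive f x (df x)) ->
  (forall x, a <= x <= b -> 0 <= df x) -> f a <= f b.
Proof.
  intros Hab Hd Hp.
  destruct (MVT_gen f a b df) as [c [Hc Heq]].
  - intros x Hx. apply Hd.
    rewrite Rmin_left, Rmax_right in Hx by lra. lra.
  - intros x Hx. apply continuity_pt_filterlim.
    apply (ex_derive_continuous (K:=R_AbsRing) (V:=R_NormedModule)).
    eexists. apply Hd. rewrite Rmin_left, Rmax_right in Hx by lra. lra.
  - rewrite Rmin_left, Rmax_right in Hc by lra.
    assert (0 <= df c * (b - a)) by (apply Rmult_le_pos; [apply Hp; lra | lra]).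
    lra.
Qed.

Lemma ln_1p_sub_ln_1m_ge (x : R) : 0 <= x < 1 -> 2 * x <= ln (1 + x) - ln (1 - x).
Proof.
  intros Hx.
  enough (ln (1 + 0) - ln (1 - 0) - 2 * 0 <= ln (1 + x) - ln (1 - x) - 2 * x)
    by (rewrite Rplus_0_r, Rminus_0_r, ln_1 in *; lra).
  apply (incr_of_derive_nonneg (fun y => ln (1 + y) - ln (1 - y) - 2 * y)
    (fun y => 2 * y ^ 2 / (1 - y ^ 2))); [lra | intros y Hy ..].
  - auto_derive; [lra | field; split; nra].
  - apply Rmult_le_pos; [nra | apply Rlt_le, Rinv_0_lt_compat; nra].
Qed.

Lemma ln_1p_sub_ln_1m_le (x : R) : 0 <= x < 1 ->
  ln (1 + x) - ln (1 - x) <= 2 * x + 2 / 3 * x ^ 3 / (1 - x ^ 2).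
Proof.
  intros Hx.
  enough (2 * 0 + 2 / 3 * 0 ^ 3 / (1 - 0 ^ 2) - (ln (1 + 0) - ln (1 - 0))
          <= 2 * x + 2 / 3 * x ^ 3 / (1 - x ^ 2) - (ln (1 + x) - ln (1 - x)))
    by (rewrite Rplus_0_r, Rminus_0_r, ln_1 in *; lra).
  apply (incr_of_derive_nonneg
    (fun y => 2 * y + 2 / 3 * y ^ 3 / (1 - y ^ 2) - (ln (1 + y) - ln (1 - y)))
    (fun y => 4 / 3 * y ^ 4 / (1 - y ^ 2) ^ 2)); [lra | intros y Hy ..].
  - auto_derive; [repeat split; nra | field; split; nra].
  - apply Rmult_le_pos; [nra | apply Rlt_le, Rinv_0_lt_compat, pow_lt; nra].
Qed.

Lemma ln_1p_ge (w : R) : 0 <= w -> w - w ^ 2 / 2 <= ln (1 + w).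
Proof.
  intros Hw.
  enough (ln (1 + 0) - (0 - 0 ^ 2 / 2) <= ln (1 + w) - (w - w ^ 2 / 2))
    by (rewrite Rplus_0_r, ln_1 in *; lra).
  apply (incr_of_derive_nonneg (fun y => ln (1 + y) - (y - y ^ 2 / 2))
    (fun y => y ^ 2 / (1 + y))); [lra | intros y Hy ..].
  - auto_derive; [lra | field; lra].
  - apply Rmult_le_pos; [nra | apply Rlt_le, Rinv_0_lt_compat; lra].
Qed.

Lemma exp_neg_le (v : R) : 0 <= v -> exp (- v) <= 1 - v + v ^ 2 / 2.
Proof.
  intros Hv.
  enough (1 - 0 + 0 ^ 2 / 2 - exp (- 0) <= 1 - v + v ^ 2 / 2 - exp (- v))
    by (rewrite Ropp_0, exp_0 in *; lra).
  apply (incr_of_derive_nonneg (fun y => 1 - y + y ^ 2 / 2 - exp (- y))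
    (fun y => exp (- y) - (1 - y))); [lra | intros y Hy ..].
  - auto_derive; [auto | field].
  - pose proof (exp_ineq1_le (- y)). lra.
Qed.

Lemma exp_le_exp (x y : R) : x <= y -> exp x <= exp y.
Proof. intros [H | ->]; [apply Rlt_le, exp_increasing | ]; lra. Qed.

Lemma ln_1p_le (u : R) : 0 < 1 + u -> ln (1 + u) <= u.
Proof. intros. rewrite <- (ln_exp u) at 2. apply ln_le; [lra | apply exp_ineq1_le]. Qed.

Lemma ln_sqrt (x : R) : 0 < x -> ln (sqrt x) = / 2 * ln x.
Proof.
  intros Hx. pose proof (sqrt_lt_R0 x Hx).
  rewrite <- (sqrt_sqrt x) at 2 by lra. rewrite ln_mult by assumption. field.
Qed.

Lemma INR_2 : INR 2 = 2.
Proof. simpl. ring. Qed.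

(** * Wallis integrals *)

Definition wallis_integral (n : nat) : R := RInt (fun x => sin x ^ n) 0 (PI / 2).

Lemma ex_RInt_sin_pow (n : nat) : ex_RInt (fun x => sin x ^ n) 0 (PI / 2).
Proof.
  apply (ex_RInt_continuous (V:=R_CompleteNormedModule)). intros z _.
  apply (ex_derive_continuous (K:=R_AbsRing) (V:=R_NormedModule)). auto_derive. auto.
Qed.

(* Integration by parts, via (cos x sin^(n+1) x)' = (n+1) sin^n x - (n+2) sin^(n+2) x. *)
Lemma wallis_integral_rec (n : nat) :
  INR (S n) * wallis_integral n = INR (S (S n)) * wallis_integral (S (S n)).
Proof.
  set (F := fun y => cos y * sin y ^ (S n)).
  assert (Hparts : is_RInt
    (fun x => INR (S n) * sin x ^ n - INR (S (S n)) * sin x ^ (S (S n))) 0 (PI / 2)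
    (minus (F (PI / 2)) (F 0))).
  { apply (is_RInt_derive (V:=R_CompleteNormedModule) F); intros x _; unfold F.
    - auto_derive; [auto |].
      change (match n with 0%nat => 1 | S _ => INR n + 1 end) with (INR (S n)).
      pose proof (sin2_cos2 x) as Hpyth. unfold Rsqr in Hpyth.
      rewrite !S_INR. simpl.
      replace (cos x * (1 * cos x * ((INR n + 1) * sin x ^ n)))
        with ((cos x * cos x) * ((INR n + 1) * sin x ^ n)) by ring.
      replace (cos x * cos x) with (1 - sin x * sin x) by lra. ring.
    - apply (ex_derive_continuous (K:=R_AbsRing) (V:=R_NormedModule)).
      auto_derive. auto. }
  assert (Hlin : is_RInt
    (fun x => INR (S n) * sin x ^ n - INR (S (S n)) * sin x ^ (S (S n))) 0 (PI / 2)
    (INR (S n) * wallis_integral n - INR (S (S n)) * wallis_integral (S (S n)))).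
  { apply (is_RInt_minus (V:=R_NormedModule)); apply (is_RInt_scal (V:=R_NormedModule));
      apply (RInt_correct (V:=R_CompleteNormedModule)), ex_RInt_sin_pow. }
  pose proof (is_RInt_unique _ _ _ _ Hparts) as E1.
  pose proof (is_RInt_unique _ _ _ _ Hlin) as E2.
  unfold F in E1. rewrite cos_PI2, sin_0 in E1.
  replace (minus (0 * sin (PI / 2) ^ S n) (cos 0 * 0 ^ S n)) with 0 in E1
    by (unfold minus, plus, opp; simpl; ring).
  lra.
Qed.

Lemma wallis_integral_0 : wallis_integral 0 = PI / 2.
Proof. unfold wallis_integral. simpl. rewrite RInt_const. compute -[PI]. ring. Qed.

Lemma wallis_integral_1 : wallis_integral 1 = 1.
Proof.
  unfold wallis_integral. apply is_RInt_unique.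
  replace 1 with (minus (- cos (PI / 2)) (- cos 0))
    by (rewrite cos_PI2, cos_0; unfold minus, plus, opp; simpl; ring).
  apply (is_RInt_derive (V:=R_CompleteNormedModule) (fun y => - cos y)); intros x _.
  - auto_derive; [auto | ring].
  - apply (ex_derive_continuous (K:=R_AbsRing) (V:=R_NormedModule)). auto_derive. auto.
Qed.

Lemma wallis_integral_decr (n : nat) : wallis_integral (S n) <= wallis_integral n.
Proof.
  pose proof PI_RGT_0.
  apply RInt_le; [lra | apply ex_RInt_sin_pow | apply ex_RInt_sin_pow |].
  intros x Hx.
  assert (0 <= sin x) by (apply sin_ge_0; lra).
  pose proof (SIN_bound x).
  assert (0 <= sin x ^ n) by (apply pow_le; lra).
  simpl. nra.
Qed.

Definition wallis_ratio (k : nat) : R := 4 ^ k * INR (fact k) ^ 2 / INR (fact (2 * k)).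

Lemma wallis_ratio_pos (k : nat) : 0 < wallis_ratio k.
Proof.
  pose proof (INR_fact_lt_0 k). pose proof (INR_fact_lt_0 (2 * k)).
  apply Rdiv_lt_0_compat; [apply Rmult_lt_0_compat; apply pow_lt |]; lra.
Qed.

Lemma wallis_ratio_S (k : nat) :
  wallis_ratio (S k) = wallis_ratio k * (2 * INR (S k) / (2 * INR k + 1)).
Proof.
  unfold wallis_ratio. replace (2 * S k)%nat with (S (S (2 * k))) by lia.
  rewrite !fact_simpl, !mult_INR, !S_INR, mult_INR, INR_2.
  pose proof (INR_fact_lt_0 k). pose proof (INR_fact_lt_0 (2 * k)). pose proof (pos_INR k).
  simpl pow. field. repeat split; lra.
Qed.

Lemma wallis_integral_SS (n : nat) :
  wallis_integral (S (S n)) = (INR n + 1) / (INR n + 2) * wallis_integral n.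
Proof.
  pose proof (wallis_integral_rec n) as Hrec. rewrite !S_INR in Hrec.
  pose proof (pos_INR n).
  apply (Rmult_eq_reg_l (INR n + 2)); [| lra].
  replace (INR n + 2) with (INR n + 1 + 1) by ring. rewrite <- Hrec. field. lra.
Qed.

Lemma wallis_integral_even (k : nat) : wallis_integral (2 * k) * wallis_ratio k = PI / 2.
Proof.
  induction k as [| k IHk].
  - rewrite Nat.mul_0_r, wallis_integral_0. unfold wallis_ratio. simpl. field.
  - replace (2 * S k)%nat with (S (S (2 * k))) by lia.
    rewrite wallis_integral_SS, wallis_ratio_S, <- IHk, mult_INR, INR_2, S_INR.
    pose proof (pos_INR k). field. lra.
Qed.

Lemma wallis_integral_odd (k : nat) :
  wallis_integral (2 * k + 1) * (2 * INR k + 1) = wallis_ratio k.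
Proof.
  induction k as [| k IHk].
  - rewrite Nat.mul_0_r, Nat.add_0_l, wallis_integral_1. unfold wallis_ratio. simpl. field.
  - replace (2 * S k + 1)%nat with (S (S (2 * k + 1))) by lia.
    rewrite wallis_integral_SS, wallis_ratio_S, <- IHk, plus_INR, mult_INR, INR_2, INR_1, S_INR.
    pose proof (pos_INR k). field. lra.
Qed.

(* Squeeze the ratio between consecutive integrals W_(2k+2) <= W_(2k+1) <= W_(2k). *)
Lemma wallis_ratio_sqr_bounds (k : nat) : (1 <= k)%nat ->
  PI * INR k <= wallis_ratio k ^ 2 <= PI * (INR k + / 2).
Proof.
  intros Hk. pose proof PI_RGT_0.
  assert (HK : 1 <= INR k) by (apply (le_INR 1); lia).
  split.
  - destruct k as [| j]; [lia |].
    pose proof (wallis_integral_decr (2 * j + 1)) as D.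
    replace (S (2 * j + 1)) with (2 * S j)%nat in D by lia.
    pose proof (wallis_integral_even (S j)) as E. pose proof (wallis_integral_odd j) as O.
    rewrite wallis_ratio_S in E |- *. rewrite S_INR in *.
    pose proof (wallis_ratio_pos j). pose proof (pos_INR j).
    set (a := wallis_ratio j) in *. set (J := INR j) in *.
    set (r := a * (2 * (J + 1) / (2 * J + 1))) in *.
    assert (Hr : 0 < r) by (unfold r; apply Rmult_lt_0_compat; [| apply Rdiv_lt_0_compat]; lra).
    assert (E2 : wallis_integral (2 * S j) = PI / 2 / r) by (rewrite <- E; field; lra).
    assert (O2 : wallis_integral (2 * j + 1) = a / (2 * J + 1)) by (rewrite <- O; field; lra).
    rewrite E2, O2 in D.
    apply Rmult_le_compat_r with (r := r * (2 * (J + 1))) in D; [| nra].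
    replace (PI / 2 / r * (r * (2 * (J + 1)))) with (PI * (J + 1)) in D by (field; lra).
    replace (a / (2 * J + 1) * (r * (2 * (J + 1)))) with (r ^ 2) in D
      by (unfold r; field; lra).
    lra.
  - pose proof (wallis_integral_decr (2 * k)) as D.
    replace (S (2 * k)) with (2 * k + 1)%nat in D by lia.
    pose proof (wallis_integral_even k) as E. pose proof (wallis_integral_odd k) as O.
    pose proof (wallis_ratio_pos k).
    set (a := wallis_ratio k) in *. set (K := INR k) in *.
    assert (E2 : wallis_integral (2 * k) = PI / 2 / a) by (rewrite <- E; field; lra).
    assert (O2 : wallis_integral (2 * k + 1) = a / (2 * K + 1)) by (rewrite <- O; field; lra).
    rewrite E2, O2 in D.
    apply Rmult_le_compat_r with (r := a * (2 * K + 1)) in D; [| nra].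
    replace (a / (2 * K + 1) * (a * (2 * K + 1))) with (a ^ 2) in D by (field; lra).
    replace (PI / 2 / a * (a * (2 * K + 1))) with (PI * (K + / 2)) in D by (field; lra).
    lra.
Qed.

(** * Stirling's formula *)

Definition stirling_rem (k : nat) : R := ln (INR (fact k)) - (INR k + / 2) * ln (INR k) + INR k.

(* With x = 1/(2k+1) the increment is (k+1/2) ln((1+x)/(1-x)) - 1 = ln((1+x)/(1-x))/(2x) - 1. *)
Lemma stirling_rem_step (k : nat) : (1 <= k)%nat ->
  0 <= stirling_rem k - stirling_rem (S k) <= 1 / (12 * INR k) - 1 / (12 * INR (S k)).
Proof.
  intros Hk. unfold stirling_rem.
  assert (HK : 1 <= INR k) by (apply (le_INR 1); lia).
  rewrite fact_simpl, mult_INR, ln_mult, !S_INR by (apply INR_fact_lt_0 || (apply lt_0_INR; lia)).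
  set (K := INR k) in *.
  set (x := 1 / (2 * K + 1)).
  assert (Hx : 0 <= x < 1).
  { unfold x. split; [apply Rlt_le, Rdiv_lt_0_compat; lra |].
    apply (Rmult_lt_reg_r (2 * K + 1)); [lra |].
    unfold Rdiv. rewrite Rmult_assoc, Rinv_l; lra. }
  assert (Hln : ln (1 + x) - ln (1 - x) = ln (K + 1) - ln K).
  { replace (1 + x) with (2 * (K + 1) / (2 * K + 1)) by (unfold x; field; lra).
    replace (1 - x) with (2 * K / (2 * K + 1)) by (unfold x; field; lra).
    rewrite !ln_div, !ln_mult by lra. ring. }
  pose proof (ln_1p_sub_ln_1m_ge x Hx) as Hlo. pose proof (ln_1p_sub_ln_1m_le x Hx) as Hhi.
  rewrite Hln in Hlo, Hhi.
  replace (ln (INR (fact k)) - (K + / 2) * ln K + K -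
    (ln (K + 1) + ln (INR (fact k)) - (K + 1 + / 2) * ln (K + 1) + (K + 1)))
    with ((K + / 2) * (ln (K + 1) - ln K) - 1) by ring.
  assert (HKx : K + / 2 = / (2 * x)) by (unfold x; field; lra).
  split.
  - apply Rle_trans with ((K + / 2) * (2 * x) - 1); [| apply Rplus_le_compat_r, Rmult_le_compat_l; lra].
    rewrite HKx. right. field. unfold x. apply Rgt_not_eq, Rdiv_lt_0_compat; lra.
  - apply Rle_trans with ((K + / 2) * (2 * x + 2 / 3 * x ^ 3 / (1 - x ^ 2)) - 1);
      [apply Rplus_le_compat_r, Rmult_le_compat_l; lra |].
    right. unfold x. field. repeat split; nra.
Qed.

Lemma stirling_rem_decr (k j : nat) : (1 <= k)%nat -> (k <= j)%nat ->
  stirling_rem j <= stirling_rem k.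
Proof.
  intros Hk Hkj. induction Hkj as [| j Hkj IH]; [lra |].
  pose proof (stirling_rem_step j ltac:(lia)). lra.
Qed.

Lemma stirling_rem_sub_incr (k j : nat) : (1 <= k)%nat -> (k <= j)%nat ->
  stirling_rem k - 1 / (12 * INR k) <= stirling_rem j - 1 / (12 * INR j).
Proof.
  intros Hk Hkj. induction Hkj as [| j Hkj IH]; [lra |].
  pose proof (stirling_rem_step j ltac:(lia)). lra.
Qed.

Lemma stirling_rem_double (k : nat) : (1 <= k)%nat ->
  2 * stirling_rem k - stirling_rem (2 * k) = ln (wallis_ratio k) - / 2 * ln (INR k) + / 2 * ln 2.
Proof.
  intros Hk. assert (HK : 1 <= INR k) by (apply (le_INR 1); lia).
  unfold stirling_rem, wallis_ratio.
  pose proof (INR_fact_lt_0 k). pose proof (INR_fact_lt_0 (2 * k)).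
  rewrite ln_div, ln_mult, !ln_pow by (try apply pow_lt; try apply Rmult_lt_0_compat;
    try apply pow_lt; lra).
  rewrite mult_INR, INR_2, ln_mult by lra.
  replace 4 with (2 * 2) by ring. rewrite ln_mult by lra. ring.
Qed.

Lemma stirling_rem_double_bounds (k : nat) : (1 <= k)%nat ->
  / 2 * ln (2 * PI) <= 2 * stirling_rem k - stirling_rem (2 * k)
  <= / 2 * ln (2 * PI) + / (4 * INR k).
Proof.
  intros Hk. assert (HK : 1 <= INR k) by (apply (le_INR 1); lia).
  pose proof (wallis_ratio_sqr_bounds k Hk) as [W1 W2].
  pose proof (wallis_ratio_pos k). pose proof PI_RGT_0.
  rewrite stirling_rem_double by assumption. rewrite ln_mult by lra.
  assert (Hsq : 2 * ln (wallis_ratio k) = ln (wallis_ratio k ^ 2))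
    by (rewrite ln_pow by lra; simpl; ring).
  split.
  - pose proof (ln_le (PI * INR k) _ ltac:(nra) W1). rewrite ln_mult in * by lra. lra.
  - pose proof (ln_le (wallis_ratio k ^ 2) _ ltac:(nra) W2) as Hl.
    assert (0 < / (2 * INR k)) by (apply Rinv_0_lt_compat; lra).
    replace (INR k + / 2) with (INR k * (1 + / (2 * INR k))) in Hl by (field; lra).
    rewrite !ln_mult in Hl by nra.
    pose proof (ln_1p_le (/ (2 * INR k)) ltac:(lra)).
    replace (/ (2 * INR k)) with (2 * / (4 * INR k)) in * by (field; lra). lra.
Qed.

Lemma exists_large_inv_lt (k : nat) (eps : R) : 0 < eps ->
  exists j, (k <= j)%nat /\ (1 <= j)%nat /\ / INR j < eps.
Proof.
  intros He. destruct (archimed_cor1 eps He) as [N [HN HN0]].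
  exists (Nat.max N k + 1)%nat. split; [lia | split; [lia |]].
  apply Rle_lt_trans with (/ INR N); [| assumption].
  apply Rinv_le_contravar; [apply lt_0_INR; lia | apply le_INR; lia].
Qed.

(* Both bounds hold in the limit: between k and a large j, then from j to 2j, the
   doubling bounds pin the remainder to ln(2 pi)/2 up to O(1/j). *)
Lemma stirling_rem_ge (k : nat) : (1 <= k)%nat -> / 2 * ln (2 * PI) <= stirling_rem k.
Proof.
  intros Hk. destruct (Rle_lt_dec (/ 2 * ln (2 * PI)) (stirling_rem k)) as [| Hlt]; [assumption | exfalso].
  destruct (exists_large_inv_lt k (/ 2 * ln (2 * PI) - stirling_rem k) ltac:(lra))
    as [j [Hkj [Hj Hinv]]].
  assert (HJ : 1 <= INR j) by (apply (le_INR 1); lia).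
  pose proof (stirling_rem_decr k j Hk Hkj).
  pose proof (stirling_rem_double_bounds j Hj) as [B _].
  pose proof (stirling_rem_sub_incr j (2 * j) Hj ltac:(lia)) as E.
  rewrite mult_INR, INR_2 in E.
  assert (1 / (12 * INR j) - 1 / (12 * (2 * INR j)) <= / INR j).
  { replace (1 / (12 * INR j) - 1 / (12 * (2 * INR j))) with (/ INR j * / 24) by (field; lra).
    assert (0 < / INR j) by (apply Rinv_0_lt_compat; lra). nra. }
  lra.
Qed.

Lemma stirling_rem_le (k : nat) : (1 <= k)%nat ->
  stirling_rem k <= / 2 * ln (2 * PI) + 1 / (12 * INR k).
Proof.
  intros Hk.
  destruct (Rle_lt_dec (stirling_rem k) (/ 2 * ln (2 * PI) + 1 / (12 * INR k))) as [| Hlt];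
    [assumption | exfalso].
  destruct (exists_large_inv_lt k (stirling_rem k - 1 / (12 * INR k) - / 2 * ln (2 * PI)) ltac:(lra))
    as [j [Hkj [Hj Hinv]]].
  assert (HJ : 1 <= INR j) by (apply (le_INR 1); lia).
  pose proof (stirling_rem_sub_incr k j Hk Hkj).
  pose proof (stirling_rem_double_bounds j Hj) as [_ B].
  pose proof (stirling_rem_decr j (2 * j) Hj ltac:(lia)).
  assert (0 < 1 / (12 * INR j)) by (apply Rdiv_lt_0_compat; lra).
  assert (/ (4 * INR j) <= / INR j) by (apply Rinv_le_contravar; lra).
  lra.
Qed.

(** * Binomial tails *)

Definition binom_term (n j : nat) (u : R) : R := Binomial.C n j * u ^ j * (1 - u) ^ (n - j).

(* [P_X n m u] is [binom_tail n m n u]; the partial sums are needed for induction. *)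
Definition binom_tail (n m N : nat) (u : R) : R :=
  sum_f_R0 (fun j => if (m <=? j)%nat then binom_term n j u else 0) N.

Lemma binom_C_pos (n j : nat) : 0 < Binomial.C n j.
Proof.
  unfold Binomial.C. apply Rdiv_lt_0_compat; [apply INR_fact_lt_0 |].
  rewrite <- mult_INR. apply lt_0_INR, Nat.mul_pos_pos; apply lt_O_fact.
Qed.

Lemma binom_term_pos (n j : nat) (u : R) : 0 < u < 1 -> 0 < binom_term n j u.
Proof.
  intros Hu. pose proof (binom_C_pos n j). unfold binom_term.
  apply Rmult_lt_0_compat; [apply Rmult_lt_0_compat |]; try apply pow_lt; lra.
Qed.

Lemma binom_term_ge0 (n j : nat) (u : R) : 0 <= u <= 1 -> 0 <= binom_term n j u.
Proof.
  intros Hu. pose proof (binom_C_pos n j). unfold binom_term.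
  apply Rmult_le_pos; [apply Rmult_le_pos |]; try apply pow_le; lra.
Qed.

Lemma binom_tail_S (n m N : nat) (u : R) :
  binom_tail n m (S N) u = binom_tail n m N u + (if (m <=? S N)%nat then binom_term n (S N) u else 0).
Proof. reflexivity. Qed.

Lemma binom_tail_ge0 (n m N : nat) (u : R) : 0 <= u <= 1 -> 0 <= binom_tail n m N u.
Proof.
  intros Hu. unfold binom_tail. induction N as [| N IH]; simpl.
  - destruct (m <=? 0)%nat; [apply binom_term_ge0 |]; lra.
  - destruct (m <=? S N)%nat; [pose proof (binom_term_ge0 n (S N) u Hu) |]; lra.
Qed.

Lemma binom_tail_lt (n m N : nat) (u : R) : (N < m)%nat -> binom_tail n m N u = 0.
Proof.
  intros HN. unfold binom_tail. induction N as [| N IH]; simpl.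
  - destruct (Nat.leb_spec m 0); [lia | reflexivity].
  - destruct (Nat.leb_spec m (S N)); [lia |]. rewrite IH by lia. ring.
Qed.

Lemma binom_term_S (n j : nat) (u : R) : (j < n)%nat -> u <> 1 ->
  binom_term n (S j) u = binom_term n j u * (INR (n - j) / INR (S j)) * (u / (1 - u)).
Proof.
  intros Hj Hu. unfold binom_term. rewrite pascal_step3 by assumption.
  replace (n - j)%nat with (S (n - S j)) by lia. simpl pow.
  field. split; [lra | apply not_0_INR; lia].
Qed.

Lemma binom_term_S_le (n m j : nat) (u : R) : (1 <= m)%nat -> (m <= j)%nat -> (j < n)%nat ->
  0 < u < 1 ->
  binom_term n (S j) u <= INR (n - m) * u / (INR m * (1 - u)) * binom_term n j u.
Proof.
  intros Hm Hmj Hjn Hu. rewrite binom_term_S by (assumption || lra).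
  pose proof (binom_term_ge0 n j u ltac:(lra)).
  assert (HM : 1 <= INR m) by (apply (le_INR 1); lia).
  assert (Hnj : INR (n - j) <= INR (n - m)) by (apply le_INR; lia).
  assert (Hmj' : INR m <= INR (S j)) by (apply le_INR; lia).
  pose proof (pos_INR (n - j)).
  replace (INR (n - m) * u / (INR m * (1 - u))) with (INR (n - m) / INR m * (u / (1 - u)))
    by (field; lra).
  rewrite (Rmult_comm (binom_term n j u)), Rmult_assoc, (Rmult_comm (binom_term n j u)), <- Rmult_assoc.
  apply Rmult_le_compat_r; [assumption |].
  apply Rmult_le_compat_r; [apply Rlt_le, Rdiv_lt_0_compat; lra |].
  apply Rle_trans with (INR (n - m) / INR (S j)).
  - apply Rmult_le_compat_r; [apply Rlt_le, Rinv_0_lt_compat; lra | assumption].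
  - apply Rmult_le_compat_l; [apply pos_INR | apply Rinv_le_contravar; lra].
Qed.

Lemma binom_tail_le_geometric (n m : nat) (u rho : R) : (1 <= m)%nat -> (m <= n)%nat ->
  0 < u < 1 -> rho = INR (n - m) * u / (INR m * (1 - u)) -> rho < 1 ->
  binom_tail n m n u <= binom_term n m u / (1 - rho).
Proof.
  intros Hm Hmn Hu Hrho Hrho1.
  assert (Hrho0 : 0 <= rho).
  { rewrite Hrho. apply Rmult_le_pos; [apply Rmult_le_pos; [apply pos_INR | lra] |].
    apply Rlt_le, Rinv_0_lt_compat, Rmult_lt_0_compat; [apply lt_0_INR; lia | lra]. }
  assert (Hpartial : forall N, (m <= N <= n)%nat ->
    binom_tail n m N u <= (binom_term n m u - rho * binom_term n N u) / (1 - rho)).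
  { induction N as [| N IH]; intros HN; [lia |].
    rewrite binom_tail_S. destruct (Nat.leb_spec m (S N)); [| lia].
    destruct (Nat.eq_dec m (S N)) as [-> | Hne].
    - rewrite binom_tail_lt by lia. right. field. lra.
    - pose proof (IH ltac:(lia)).
      pose proof (binom_term_S_le n m N u Hm ltac:(lia) ltac:(lia) Hu) as Hstep.
      rewrite <- Hrho in Hstep.
      apply Rle_trans with ((binom_term n m u - rho * binom_term n N u) / (1 - rho)
                            + binom_term n (S N) u); [lra |].
      apply Rmult_le_reg_r with (1 - rho); [lra |].
      unfold Rdiv. rewrite Rmult_plus_distr_r, !Rmult_assoc, Rinv_l by lra. nra. }
  pose proof (Hpartial n ltac:(lia)). pose proof (binom_term_ge0 n n u ltac:(lra)).
  apply Rle_trans with (1 := H). unfold Rdiv.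
  apply Rmult_le_compat_r; [apply Rlt_le, Rinv_0_lt_compat; lra | nra].
Qed.

Lemma is_derive_binom_term (n j : nat) (u : R) : is_derive (binom_term n j) u
  (Binomial.C n j * (INR j * u ^ pred j * (1 - u) ^ (n - j)
                     - INR (n - j) * u ^ j * (1 - u) ^ pred (n - j))).
Proof.
  assert (Hj : is_derive (fun x : R => x ^ j) u (INR j * 1 * u ^ pred j))
    by (apply (is_derive_pow (fun x => x)), (is_derive_id (K:=R_AbsRing))).
  assert (Hnj : is_derive (fun x : R => (1 - x) ^ (n - j)) u
                  (INR (n - j) * (-1) * (1 - u) ^ pred (n - j)))
    by (apply (is_derive_pow (fun x => 1 - x)); auto_derive; [auto | ring]).
  pose proof (is_derive_scal _ u (Binomial.C n j) _
                (is_derive_mult (K:=R_AbsRing) _ _ u _ _ Hj Hnj Rmult_comm)) as H.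
  unfold plus, mult in H; simpl in H. unfold mult in H; simpl in H.
  replace (INR j * u ^ pred j * (1 - u) ^ (n - j) - INR (n - j) * u ^ j * (1 - u) ^ pred (n - j))
    with (INR j * 1 * u ^ pred j * (1 - u) ^ (n - j)
          + u ^ j * (INR (n - j) * -1 * (1 - u) ^ pred (n - j))) by ring.
  refine (is_derive_ext _ _ u _ _ H). intros x. unfold binom_term. simpl. ring.
Qed.

(* The derivatives of consecutive terms telescope. *)
Lemma is_derive_binom_tail (n m N : nat) (u : R) : (1 <= m)%nat -> (m <= N)%nat -> (N <= n)%nat ->
  is_derive (binom_tail n m N) u
    (INR m * Binomial.C n m * u ^ (m - 1) * (1 - u) ^ (n - m)
     - INR (n - N) * Binomial.C n N * u ^ N * (1 - u) ^ (n - N - 1)).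
Proof.
  intros Hm. induction N as [| N IH]; intros HmN HNn; [lia |].
  apply is_derive_ext with (fun x => binom_tail n m N x + binom_term n (S N) x).
  { intros x. rewrite binom_tail_S. destruct (Nat.leb_spec m (S N)); [reflexivity | lia]. }
  pose proof (is_derive_binom_term n (S N) u) as Hterm.
  simpl pred in Hterm. rewrite <- (Nat.sub_1_r (n - S N)), S_INR in Hterm.
  destruct (Nat.eq_dec m (S N)) as [-> | Hne].
  - apply is_derive_ext with (binom_term n (S N)).
    { intros x. rewrite binom_tail_lt by lia. simpl. ring. }
    refine (eq_ind _ (is_derive _ u) Hterm _ _). replace (S N - 1)%nat with N by lia.
    rewrite S_INR. simpl. ring.
  - pose proof (is_derive_plus (K:=R_AbsRing) _ _ u _ _ (IH ltac:(lia) ltac:(lia)) Hterm) as Hsum.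
    refine (eq_ind _ (is_derive _ u) Hsum _ _). unfold plus; simpl.
    replace (n - N - 1)%nat with (n - S N)%nat by lia.
    rewrite pascal_step3, S_INR by lia. pose proof (pos_INR N). field. lra.
Qed.

(* Writing 1 - u = (1 - phi)(1 + w), one has w = phi/(1-phi) (1 - e^(-v)) with
   v = ln (phi / u), and w - w^2/2 <= ln (1 + w). *)
Lemma ln_one_sub_ge (phi u : R) : 0 < u <= phi -> phi < 1 ->
  phi / (1 - phi) * (ln phi - ln u) - phi / (2 * (1 - phi) ^ 2) * (ln phi - ln u) ^ 2
  <= ln (1 - u) - ln (1 - phi).
Proof.
  intros Hu Hphi.
  set (v := ln phi - ln u). set (q := 1 - phi).
  assert (Hv : 0 <= v) by (pose proof (ln_le u phi ltac:(lra) ltac:(lra)); unfold v; lra).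
  assert (Hq : 0 < q) by (unfold q; lra).
  set (w := (phi - u) / q).
  assert (Hw : 0 <= w) by (apply Rmult_le_pos; [lra | apply Rlt_le, Rinv_0_lt_compat; lra]).
  assert (Hlnw : ln (1 - u) - ln q = ln (1 + w)).
  { replace (1 - u) with (q * (1 + w)) by (unfold w, q; field; lra).
    rewrite ln_mult by lra. ring. }
  assert (Hexp : exp (- v) = u / phi).
  { unfold v. replace (- (ln phi - ln u)) with (ln u + - ln phi) by ring.
    rewrite exp_plus, exp_Ropp, !exp_ln by lra. field. lra. }
  assert (Hwv : w = phi / q * (1 - exp (- v))) by (rewrite Hexp; unfold w; field; lra).
  pose proof (exp_neg_le v Hv). pose proof (exp_ineq1_le (- v)). pose proof (ln_1p_ge w Hw).
  assert (Hpq : 0 < phi / q) by (apply Rdiv_lt_0_compat; lra).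
  assert (W1 : phi / q * (v - v ^ 2 / 2) <= w) by (rewrite Hwv; apply Rmult_le_compat_l; lra).
  assert (W2 : w <= phi / q * v) by (rewrite Hwv; apply Rmult_le_compat_l; lra).
  assert (W3 : w ^ 2 <= (phi / q * v) ^ 2) by (apply pow_incr; lra).
  replace (phi / q * v - phi / (2 * q ^ 2) * v ^ 2)
    with (phi / q * (v - v ^ 2 / 2) - (phi / q * v) ^ 2 / 2) by (unfold q; field; lra).
  lra.
Qed.

Section BinomTailLower.

Variables (n m : nat) (phi a b : R).
Hypotheses (Hm : (1 <= m)%nat) (Hmn : (m < n)%nat) (Hphi : 0 < phi < 1)
  (Ha_def : a = INR m - INR (n - m) * phi / (1 - phi))
  (Hb_def : b = INR (n - m) * phi / (2 * (1 - phi) ^ 2))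
  (Ha : 0 < a).

Let c := 2 * b / a ^ 2.
Let K := INR m * Binomial.C n m * phi ^ (m - 1) * (1 - phi) ^ (n - m) * exp (- c).

Let comparison (x : R) : R :=
  K * (phi / a) * exp (- a * (ln phi - ln x))
  * (1 - b * (ln phi - ln x) ^ 2 - 2 * b * (ln phi - ln x) / a).

Lemma is_derive_comparison (x : R) : 0 < x ->
  is_derive comparison x (K * exp (- (a - 1) * (ln phi - ln x)) * (1 + c - b * (ln phi - ln x) ^ 2)).
Proof.
  intros Hx. unfold comparison. auto_derive; [auto |].
  assert (Hshift : exp (- (a - 1) * (ln phi - ln x)) = exp (- a * (ln phi - ln x)) * (phi / x)).
  { replace (- (a - 1) * (ln phi - ln x)) with (- a * (ln phi - ln x) + (ln phi + - ln x)) by ring.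
    rewrite !exp_plus, exp_Ropp, !exp_ln by lra. field. lra. }
  rewrite Hshift. unfold c.
  unfold Rminus. set (L := ln phi + - ln x). set (E := exp (- a * L)).
  field. lra.
Qed.

(* By [ln_one_sub_ge], u^(m-1) (1-u)^(n-m) >= phi^(m-1) (1-phi)^(n-m) e^(-(a-1) v - b v^2)
   with v = ln (phi/u), and e^(-b v^2) >= e^(-c) (1 + c - b v^2). *)
Lemma derive_comparison_le_derive_tail (u : R) : 0 < u <= phi ->
  K * exp (- (a - 1) * (ln phi - ln u)) * (1 + c - b * (ln phi - ln u) ^ 2)
  <= INR m * Binomial.C n m * u ^ (m - 1) * (1 - u) ^ (n - m).
Proof.
  intros Hu.
  set (v := ln phi - ln u). set (q := 1 - phi) in *.
  assert (Hq : 0 < q) by (unfold q; lra).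
  assert (HmC : 0 < INR m * Binomial.C n m) by (apply Rmult_lt_0_compat; [apply lt_0_INR; lia | apply binom_C_pos]).
  pose proof (pos_INR (n - m)) as Hnm.
  pose proof (ln_one_sub_ge phi u Hu ltac:(lra)) as Hln. fold q v in Hln.
  assert (Hpow : forall (x : R) k, 0 < x -> x ^ k = exp (INR k * ln x))
    by (intros x k Hx; rewrite <- ln_pow, exp_ln by (try apply pow_lt; lra); reflexivity).
  unfold K. rewrite !(Hpow _ (m - 1)%nat), !(Hpow _ (n - m)%nat) by lra.
  rewrite minus_INR, INR_1 by lia.
  set (X := (INR m - 1) * ln phi + INR (n - m) * ln q + - c + - (a - 1) * v).
  replace (INR m * Binomial.C n m * exp ((INR m - 1) * ln phi) * exp (INR (n - m) * ln q) * exp (- c)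
           * exp (- (a - 1) * v) * (1 + c - b * v ^ 2))
    with (INR m * Binomial.C n m * (exp X * (1 + c - b * v ^ 2)))
    by (unfold X; rewrite !exp_plus; ring).
  replace (INR m * Binomial.C n m * exp ((INR m - 1) * ln u) * exp (INR (n - m) * ln (1 - u)))
    with (INR m * Binomial.C n m * exp ((INR m - 1) * ln u + INR (n - m) * ln (1 - u)))
    by (rewrite exp_plus; ring).
  apply Rmult_le_compat_l; [lra |].
  apply Rle_trans with (exp X * exp (c - b * v ^ 2)).
  - apply Rmult_le_compat_l; [apply Rlt_le, exp_pos |].
    pose proof (exp_ineq1_le (c - b * v ^ 2)). lra.
  - rewrite <- exp_plus. apply exp_le_exp.
    replace (ln u) with (ln phi - v) by (unfold v; ring).
    assert (INR (n - m) * (phi / q * v - phi / (2 * q ^ 2) * v ^ 2)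
            <= INR (n - m) * (ln (1 - u) - ln q)) by (apply Rmult_le_compat_l; assumption).
    unfold X. rewrite Ha_def, Hb_def. unfold q in *.
    replace (INR (n - m) * phi / (1 - phi)) with (INR (n - m) * (phi / (1 - phi))) by (field; lra).
    replace (INR (n - m) * phi / (2 * (1 - phi) ^ 2))
      with (INR (n - m) * (phi / (2 * (1 - phi) ^ 2))) by (field; lra).
    nra.
Qed.

Lemma comparison_nonpos : exists u0, 0 < u0 < phi /\ comparison u0 <= 0.
Proof.
  assert (Hb : 0 < b).
  { rewrite Hb_def. apply Rdiv_lt_0_compat.
    - pose proof (lt_0_INR (n - m) ltac:(lia)). nra.
    - apply Rmult_lt_0_compat; [lra | apply pow_lt; lra]. }
  assert (HK : 0 < K).
  { pose proof (binom_C_pos n m). pose proof (lt_0_INR m ltac:(lia)). pose proof (exp_pos (- c)).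
    assert (0 < phi ^ (m - 1)) by (apply pow_lt; lra).
    assert (0 < (1 - phi) ^ (n - m)) by (apply pow_lt; lra).
    unfold K. repeat (assumption || apply Rmult_lt_0_compat). }
  set (V := / sqrt b).
  assert (HV : 0 < V) by (apply Rinv_0_lt_compat, sqrt_lt_R0; lra).
  assert (HbV : b * V ^ 2 = 1).
  { unfold V. rewrite pow_inv. simpl. rewrite Rmult_1_r, sqrt_sqrt by lra. field. lra. }
  exists (phi * exp (- V)). split.
  - split; [apply Rmult_lt_0_compat; [lra | apply exp_pos] |].
    rewrite <- (Rmult_1_r phi) at 2. apply Rmult_lt_compat_l; [lra |].
    rewrite <- exp_0. apply exp_increasing. lra.
  - unfold comparison.
    replace (ln phi - ln (phi * exp (- V))) with V
      by (rewrite ln_mult, ln_exp by (lra || apply exp_pos); ring).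
    replace (1 - b * V ^ 2 - 2 * b * V / a) with (- (2 * b * V / a)) by lra.
    assert (0 < 2 * b * V / a) by (apply Rdiv_lt_0_compat; nra).
    assert (0 < K * (phi / a) * exp (- a * V)).
    { apply Rmult_lt_0_compat; [apply Rmult_lt_0_compat |]; try apply exp_pos; try assumption.
      apply Rdiv_lt_0_compat; lra. }
    nra.
Qed.

Lemma comparison_at_phi : comparison phi = binom_term n m phi * (INR m / a) * exp (- c).
Proof.
  unfold comparison, K, binom_term. rewrite Rminus_diag, Rmult_0_r, exp_0.
  replace (phi ^ m) with (phi * phi ^ (m - 1))
    by (rewrite tech_pow_Rmult; f_equal; lia).
  field. lra.
Qed.

(* The tail minus [comparison] increases on [u0, phi]. *)
Lemma binom_tail_ge :
  binom_term n m phi * (INR m / a) * exp (- (2 * b / a ^ 2)) <= binom_tail n m n phi.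
Proof.
  destruct comparison_nonpos as [u0 [Hu0 Hneg]].
  assert (Hincr : binom_tail n m n u0 - comparison u0 <= binom_tail n m n phi - comparison phi).
  { apply (incr_of_derive_nonneg (fun x => binom_tail n m n x - comparison x)
      (fun x => INR m * Binomial.C n m * x ^ (m - 1) * (1 - x) ^ (n - m)
                - K * exp (- (a - 1) * (ln phi - ln x)) * (1 + c - b * (ln phi - ln x) ^ 2)));
      [lra | intros x Hx ..].
    - pose proof (is_derive_binom_tail n m n x Hm ltac:(lia) ltac:(lia)) as Htail.
      rewrite Nat.sub_diag, Rmult_0_l, !Rmult_0_l, Rminus_0_r in Htail.
      exact (is_derive_minus (K:=R_AbsRing) (V:=R_NormedModule) _ _ x _ _ Htail
               (is_derive_comparison x ltac:(lra))).
    - pose proof (derive_comparison_le_derive_tail x ltac:(lra)). lra. }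
  pose proof (binom_tail_ge0 n m n u0 ltac:(lra)).
  rewrite comparison_at_phi in Hincr. fold c. lra.
Qed.

End BinomTailLower.

(** * The tail at the threshold m = n t *)

Lemma lE_ge (n : nat) (t phi : R) : (1 <= n)%nat -> 0 < phi -> phi < t -> t < 1 ->
  1 / (12 * INR n) <= lE n t phi / (INR n * (t - phi)).
Proof.
  intros Hn Hphi Hphit Ht. assert (HN : 1 <= INR n) by (apply (le_INR 1); lia).
  pose proof PI2_3_2.
  assert (Hsqrt : 1 <= sqrt (PI * INR n / (8 * phi * (1 - phi)))).
  { rewrite <- sqrt_1 at 1. apply sqrt_le_1_alt.
    assert (0 < 8 * phi * (1 - phi) <= 2) by (pose proof (pow2_ge_0 (2 * phi - 1)); split; nra).
    apply Rle_trans with (3 * / 2); [lra |].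
    apply Rmult_le_compat; [lra | lra | nra | apply Rinv_le_contravar; lra]. }
  assert (HlE : (t - phi) / 12 <= lE n t phi) by (unfold lE; apply Rmin_glb; nra).
  apply Rle_trans with ((t - phi) / 12 / (INR n * (t - phi))).
  - right. field. lra.
  - apply Rmult_le_compat_r; [apply Rlt_le, Rinv_0_lt_compat; nra | assumption].
Qed.

Section TailAtThreshold.

Variables (n m : nat) (phi t : R).
Hypotheses (hn : (1 <= n)%nat) (hphi : 0 < phi) (hphit : phi < t) (ht1 : t < 1)
  (hnt : INR n * t = INR m).

Lemma threshold_ge1 : (1 <= m)%nat.
Proof. destruct m; [simpl in hnt; pose proof (lt_0_INR n ltac:(lia)); nra | lia]. Qed.

Lemma threshold_lt : (m < n)%nat.
Proof. apply INR_lt. pose proof (lt_0_INR n ltac:(lia)). nra. Qed.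

Lemma INR_sub_threshold : INR (n - m) = INR n * (1 - t).
Proof. rewrite minus_INR by (pose proof threshold_lt; lia). rewrite <- hnt. ring. Qed.

Lemma P_X_le_geometric : P_X n m phi <= binom_term n m phi * (t * (1 - phi) / (t - phi)).
Proof.
  pose proof (lt_0_INR n ltac:(lia)).
  set (rho := INR (n - m) * phi / (INR m * (1 - phi))).
  assert (Hrho : 1 - rho = (t - phi) / (t * (1 - phi))).
  { unfold rho. rewrite INR_sub_threshold, <- hnt. field. repeat split; nra. }
  assert (rho < 1) by (assert (0 < (t - phi) / (t * (1 - phi))) by (apply Rdiv_lt_0_compat; nra); lra).
  apply Rle_trans with (binom_term n m phi / (1 - rho)).
  - apply (binom_tail_le_geometric n m phi rho);
      [apply threshold_ge1 | pose proof threshold_lt; lia | lra | reflexivity | assumption].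
  - right. rewrite Hrho. field. repeat split; nra.
Qed.

Lemma P_X_ge_geometric :
  binom_term n m phi * (t * (1 - phi) / (t - phi)) * exp (- ((1 - t) * phi / (INR n * (t - phi) ^ 2)))
  <= P_X n m phi.
Proof.
  pose proof (lt_0_INR n ltac:(lia)).
  set (a := INR m - INR (n - m) * phi / (1 - phi)).
  set (b := INR (n - m) * phi / (2 * (1 - phi) ^ 2)).
  assert (Ha : a = INR n * (t - phi) / (1 - phi)).
  { unfold a. rewrite INR_sub_threshold, <- hnt. field. lra. }
  assert (Hapos : 0 < a) by (rewrite Ha; apply Rdiv_lt_0_compat; nra).
  pose proof (binom_tail_ge n m phi a b threshold_ge1 threshold_lt ltac:(lra) eq_refl eq_refl Hapos) as Hlow.
  replace (INR m / a) with (t * (1 - phi) / (t - phi)) in Hlow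
    by (rewrite Ha, <- hnt; field; repeat split; nra).
  replace (2 * b / a ^ 2) with ((1 - t) * phi / (INR n * (t - phi) ^ 2)) in Hlow
    by (rewrite Ha; unfold b; rewrite INR_sub_threshold; field; repeat split; nra).
  exact Hlow.
Qed.

Lemma ln_geometric_bound_eq :
  ln (binom_term n m phi) + ln (t * (1 - phi) / (t - phi))
  = stirling_rem n - stirling_rem m - stirling_rem (n - m) + / 2 * ln (2 * PI)
    - (- ln (P_CH n t phi) + / 2 * ln (INR n)
       - ln ((1 - phi) / (t - phi) * sqrt (t / (2 * PI * (1 - t))))).
Proof.
  pose proof (lt_0_INR n ltac:(lia)). pose proof PI_RGT_0.
  pose proof (INR_fact_lt_0 n). pose proof (INR_fact_lt_0 m). pose proof (INR_fact_lt_0 (n - m)).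
  assert (Hm : 0 < INR m) by (rewrite <- hnt; nra).
  assert (Hnm : 0 < INR (n - m)) by (rewrite INR_sub_threshold; nra).
  assert (Hln_term : ln (binom_term n m phi)
    = ln (INR (fact n)) - ln (INR (fact m)) - ln (INR (fact (n - m)))
      + INR m * ln phi + INR (n - m) * ln (1 - phi)).
  { pose proof (binom_C_pos n m).
    assert (0 < phi ^ m) by (apply pow_lt; lra).
    assert (0 < (1 - phi) ^ (n - m)) by (apply pow_lt; lra).
    unfold binom_term. rewrite !ln_mult, !ln_pow by (repeat (assumption || apply Rmult_lt_0_compat); lra).
    unfold Binomial.C. rewrite ln_div, ln_mult by (try apply Rmult_lt_0_compat; assumption).
    ring. }
  assert (Hln_CH : ln (P_CH n t phi)
    = INR m * (ln phi - ln t) + INR (n - m) * (ln (1 - phi) - ln (1 - t))).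
  { unfold P_CH. destruct (Rle_dec phi t) as [_ |]; [| lra]. unfold Rpower.
    rewrite ln_mult, !ln_exp, !ln_div by (apply exp_pos || lra).
    rewrite hnt, INR_sub_threshold. ring. }
  assert (Hln_const : ln ((1 - phi) / (t - phi) * sqrt (t / (2 * PI * (1 - t))))
    = ln (1 - phi) - ln (t - phi) + / 2 * (ln t - ln (2 * PI) - ln (1 - t))).
  { rewrite ln_mult, ln_sqrt, !ln_div, ln_mult
      by (try apply sqrt_lt_R0; try apply Rdiv_lt_0_compat; try apply Rmult_lt_0_compat; lra).
    field. }
  unfold stirling_rem.
  rewrite Hln_term, Hln_CH, Hln_const, ln_div, ln_mult by (try apply Rmult_lt_0_compat; lra).
  replace (ln (INR m)) with (ln (INR n) + ln t) by (rewrite <- hnt, ln_mult; lra).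
  replace (ln (INR (n - m))) with (ln (INR n) + ln (1 - t))
    by (rewrite INR_sub_threshold, ln_mult; lra).
  rewrite INR_sub_threshold, <- hnt. field.
Qed.

Lemma ln_P_X_bounds :
  ln (binom_term n m phi) + ln (t * (1 - phi) / (t - phi)) - (1 - t) * phi / (INR n * (t - phi) ^ 2)
  <= ln (P_X n m phi) <= ln (binom_term n m phi) + ln (t * (1 - phi) / (t - phi)).
Proof.
  pose proof (lt_0_INR n ltac:(lia)).
  set (c := (1 - t) * phi / (INR n * (t - phi) ^ 2)).
  assert (Hb : 0 < binom_term n m phi) by (apply binom_term_pos; lra).
  assert (Hr : 0 < t * (1 - phi) / (t - phi)) by (apply Rdiv_lt_0_compat; nra).
  assert (Hlow : 0 < binom_term n m phi * (t * (1 - phi) / (t - phi)) * exp (- c))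
    by (pose proof (exp_pos (- c)); apply Rmult_lt_0_compat; [apply Rmult_lt_0_compat |]; assumption).
  pose proof P_X_ge_geometric as Hge. fold c in Hge. pose proof P_X_le_geometric.
  rewrite <- ln_mult by assumption.
  split.
  - apply Rle_trans with (ln (binom_term n m phi * (t * (1 - phi) / (t - phi)) * exp (- c))).
    + rewrite (ln_mult _ (exp (- c))), ln_exp by (apply exp_pos || nra). lra.
    + apply ln_le; assumption.
  - apply ln_le; [lra | assumption].
Qed.

Lemma stirling_rem_combination_bounds :
  - (1 / (12 * INR n * t * (1 - t)))
  <= stirling_rem n - stirling_rem m - stirling_rem (n - m) + / 2 * ln (2 * PI)
  <= 1 / (12 * INR n).
Proof.
  pose proof threshold_ge1. pose proof threshold_lt. pose proof (lt_0_INR n ltac:(lia)).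
  pose proof (stirling_rem_ge n hn). pose proof (stirling_rem_le n hn).
  pose proof (stirling_rem_ge m ltac:(assumption)). pose proof (stirling_rem_le m ltac:(assumption)).
  pose proof (stirling_rem_ge (n - m) ltac:(lia)). pose proof (stirling_rem_le (n - m) ltac:(lia)).
  assert (1 / (12 * INR m) + 1 / (12 * INR (n - m)) = 1 / (12 * INR n * t * (1 - t)))
    by (rewrite INR_sub_threshold, <- hnt; field; repeat split; nra).
  lra.
Qed.

End TailAtThreshold.

Theorem mainTheorem9 (n m : nat) (phi t : R)
  (hn : (1 <= n)%nat) (hphi : 0 < phi) (hphit : phi < t) (ht1 : t < 1)
  (hnt : INR n * t = INR m) :
  let base := - ln (P_CH n t phi) + / 2 * ln (INR n)
              - ln ((1 - phi) / (t - phi) * sqrt (t / (2 * PI * (1 - t)))) in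
  base - lE n t phi / (INR n * (t - phi)) <= - ln (P_X n m phi) <=
  base + (phi * (1 - phi) / ((t - phi) ^ 2 * INR n) + 1 / (12 * INR n * t * (1 - t))).
Proof.
  intros base.
  pose proof (ln_P_X_bounds n m phi t hn hphi hphit ht1 hnt) as HPX.
  pose proof (ln_geometric_bound_eq n m phi t hn hphi hphit ht1 hnt) as Hbase. fold base in Hbase.
  pose proof (stirling_rem_combination_bounds n m phi t hn hphi hphit ht1 hnt).
  pose proof (lE_ge n t phi hn hphi hphit ht1).
  assert ((1 - t) * phi / (INR n * (t - phi) ^ 2) <= phi * (1 - phi) / ((t - phi) ^ 2 * INR n)).
  { pose proof (lt_0_INR n ltac:(lia)).
    rewrite (Rmult_comm ((t - phi) ^ 2)). unfold Rdiv.
    apply Rmult_le_compat_r; [apply Rlt_le, Rinv_0_lt_compat, Rmult_lt_0_compat, pow_lt | ]; nra. }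
  lra.
Qed.
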